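(* Let $X$ be a finite set, let $\mathcal{C}^{\ast}$ be a target clustering of $X$, and let $\gamma$ be any natural clustering error (with respect to $\mathcal{C}^{\ast}$). Then for every clustering $\mathcal{C}$ of $X$, $$\gamma(\mathcal{C},\mathcal{C}^{\ast}) \ge \delta(\mathcal{C},\mathcal{C}^{\ast}),$$ where $\delta(\mathcal{C},\mathcal{C}^{\ast}) = \mathrm{dist}(\mathcal{C}^{\ast},\mathcal{C}) + \mathrm{dist}(\mathcal{C},\mathcal{C}^{\ast})$.
   Context: A clustering of a finite set $X$ is a partition of $X$ into nonempty clusters. The target (ground-truth) clustering is $\mathcal{C}^{\ast}=\{C^{\ast}_1,\dots,C^{\ast}_k\}$. For clusterings $\mathcal{C},\mathcal{C}'$ of $X$ define $\mathrm{dist}(\mathcal{C},\mathcal{C}')=\sum_{A\in\mathcal{C}}\big(|\{B\in\mathcal{C}': B\cap A\neq\emptyset\}|-1\big)$. For a proposed clustering $\mathcal{C}$, $\delta_u=\mathrm{dist}(\mathcal{C}^{\ast},\mathcal{C})$ is its underclustering error, $\delta_o=\mathrm{dist}(\mathcal{C},\mathcal{C}^{\ast})$ its overclustering error, and $\delta(\mathcal{C},\mathcal{C}^{\ast})=\delta_u+\delta_o$. A natural clustering error is a function $\gamma$ assigning to each clustering $\mathcal{C}$ of $X$ a nonnegative integer $\gamma(\mathcal{C},\mathcal{C}^{\ast})$ such that for every clustering $\mathcal{C}$: (1) if some cluster $C_i\in\mathcal{C}$ contains points of $C^{\ast}_j$ and points of some other target cluster, then the clustering obtained by replacing $C_i$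 with the two clusters $C_i\cap C^{\ast}_j$ and $C_i\setminus C^{\ast}_j$ has strictly smaller $\gamma$; (2) if two distinct clusters of $\mathcal{C}$ both contain only points from the same target cluster, then the clustering obtained by replacing them with their union has strictly smaller $\gamma$. *)

From mathcomp Require Import all_boot.
Set Implicit Arguments. Unset Strict Implicit. Unset Printing Implicit Defensive.

Definition clustering (T : finType) (C : {set {set T}}) : bool :=
  partition C [set: T].

Definition cdist (T : finType) (C C' : {set {set T}}) : nat :=
  \sum_(A in C) (#|[set B in C' | B :&: A != set0]| - 1).

Definition delta (T : finType) (C Cstar : {set {set T}}) : nat :=
  cdist Cstar C + cdist C Cstar.

Definition split_cluster (T : finType) (C : {set {set T}}) (Ci Cj : {set T})
  : {set {set T}} :=
  (C :\ Ci) :|: [set Ci :&: Cj; Ci :\: Cj].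

Definition merge_clusters (T : finType) (C : {set {set T}}) (A B : {set T})
  : {set {set T}} :=
  (C :\ A :\ B) :|: [set A :|: B].

Definition natural_error (T : finType) (Cstar : {set {set T}})
  (gamma : {set {set T}} -> nat) : Prop :=
  forall C : {set {set T}}, clustering C ->
    (forall Ci Cj, Ci \in C -> Cj \in Cstar ->
       Ci :&: Cj != set0 ->
       (exists2 Ck, Ck \in Cstar & (Ck != Cj) && (Ci :&: Ck != set0)) ->
       gamma (split_cluster C Ci Cj) < gamma C)
    /\
    (forall A B, A \in C -> B \in C -> A != B ->
       (exists2 Cj, Cj \in Cstar & (A \subset Cj) && (B \subset Cj)) ->
       gamma (merge_clusters C A B) < gamma C).

From mathcomp Require Import all_boot zify.
Set Implicit Arguments. Unset Strict Implicit. Unset Printing Implicit Defensive.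

(* Count the incidences of C with the target, i.e. the pairs (A, B) of a block
   A of C and a target cluster B that meet.  Counting them from both sides
   gives delta C Cstar + |C| + |Cstar| = 2 * #incidences.  Hence splitting a
   block that meets two target clusters, or merging two blocks that lie in a
   common target cluster, lowers delta by at most one, while it lowers any
   natural error by at least one.  When delta > 0 one of the two moves is
   available, so induction on gamma gives delta <= gamma. *)

Section Replace.
Variable T : finType.
Implicit Types (P Q R : {set {set T}}) (D : {set T}).

Lemma disjoint_cover_setD P Q :
  trivIset P -> Q \subset P -> [disjoint cover (P :\: Q) & cover Q].
Proof.
move=> /trivIsetP tP /subsetP sQP; rewrite disjoint_sym.
apply/bigcup_disjointP=> A /setDP[AP AnQ]; rewrite disjoint_sym.
apply/bigcup_disjointP=> B BQ; apply: tP => //; first exact: sQP.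
by apply: contraNneq AnQ => ->.
Qed.

Lemma partition_replace P Q R D :
  partition P D -> Q \subset P -> partition R (cover Q) ->
  partition ((P :\: Q) :|: R) D.
Proof.
move=> /and3P[/eqP covP tP P0] sQP /and3P[/eqP covR tR R0]; apply/and3P; split.
- rewrite /cover bigcup_setU -/(cover R) covR -bigcup_setU -covP.
  by rewrite setDE setUIl [~: Q :|: Q]setUC setUCr setIT (setUidPl sQP).
- by apply: trivIsetU (trivIsetD _ tP) tR _; rewrite covR disjoint_cover_setD.
- by rewrite !inE (negbTE P0) (negbTE R0) andbF.
Qed.

Lemma disjoint_replace P Q R D :
  partition P D -> Q \subset P -> partition R (cover Q) -> [disjoint P :\: Q & R].
Proof.
move=> partP sQP partR; rewrite -setI_eq0; apply/eqP/setP=> A; rewrite !inE.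
apply/negP=> /andP[/andP[AnQ AP] AR].
have dis := disjoint_cover_setD (partition_trivIset partP) sQP.
case/set0Pn: (partition_neq0 partR AR) => x xA.
have xQ : x \in cover Q by rewrite -(cover_partition partR); apply/bigcupP; exists A.
have : x \in cover (P :\: Q) by apply/bigcupP; exists A; rewrite // inE AnQ AP.
by rewrite (disjointFl dis xQ).
Qed.

Lemma partition_set1 D : D != set0 -> partition [set D] D.
Proof. by move=> D0; rewrite /partition cover1 trivIset1 inE eq_sym D0 eqxx. Qed.

Lemma partition_setID D E :
  D :&: E != set0 -> D :\: E != set0 -> partition [set D :&: E; D :\: E] D.
Proof.
move=> DI0 DD0; apply/and3P; split.
- by rewrite /cover bigcup_setU !big_set1 setID.
- apply/trivIsetP=> X Y; rewrite !inE => /orP[]/eqP-> /orP[]/eqP->;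
    rewrite ?eqxx // => _; rewrite -setI_eq0; apply/eqP/setP=> x;
    by rewrite !inE; case: (x \in D); case: (x \in E).
- by rewrite !inE ![set0 == _]eq_sym negb_or DI0 DD0.
Qed.

End Replace.

Section Meets.
Variable T : finType.
Implicit Types (C D Q R : {set {set T}}) (A B : {set T}).

Definition meets D A := [set B in D | B :&: A != set0].

Definition weight C D := \sum_(A in C) #|meets D A|.

Lemma card_meetsE D A : #|meets D A| = \sum_(B in D) (B :&: A != set0).
Proof.
rewrite -sum1_card (eq_bigl (fun B => (B \in D) && (B :&: A != set0))) => [|B];
  last by rewrite inE.
by rewrite big_mkcondr; apply: eq_bigr => B _; case: (_ != _).
Qed.

Lemma weightC C D : weight C D = weight D C.
Proof.
rewrite /weight; under eq_bigr do rewrite card_meetsE.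
rewrite exchange_big; apply: eq_bigr => B _; rewrite card_meetsE.
by apply: eq_bigr => A _; rewrite setIC.
Qed.

Lemma card_meets_gt0 D A : clustering D -> A != set0 -> 0 < #|meets D A|.
Proof.
move=> cD /set0Pn[x xA]; have : x \in cover D by rewrite (cover_partition cD) inE.
case/bigcupP=> B BD xB; rewrite card_gt0; apply/set0Pn; exists B.
by rewrite inE BD; apply/set0Pn; exists x; rewrite inE xB xA.
Qed.

Lemma card_meets_le1 D A B :
  trivIset D -> B \in D -> A \subset B -> #|meets D A| <= 1.
Proof.
move=> tD BD sAB; rewrite -(cards1 B); apply: subset_leq_card.
apply/subsetP=> K; rewrite !inE => /andP[KD /set0Pn[x]]; rewrite inE => /andP[xK xA].
by rewrite -(def_pblock tD KD xK) (def_pblock tD BD (subsetP sAB _ xA)).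
Qed.

Lemma card_meets_cover_le R D : #|meets D (cover R)| <= weight R D.
Proof.
rewrite card_meetsE /weight; under [X in _ <= X]eq_bigr do rewrite card_meetsE.
rewrite exchange_big; apply: leq_sum => B _.
have [[x]|] := set0Pn (B :&: cover R); last by [].
rewrite inE => /andP[xB /bigcupP[A AR xA]]; rewrite (bigD1 A AR) /=.
suff -> : B :&: A != set0 by [].
by apply/set0Pn; exists x; rewrite inE xB xA.
Qed.

Lemma subset_of_card_meets_le1 D A B :
  clustering D -> B \in D -> B :&: A != set0 -> #|meets D A| <= 1 -> A \subset B.
Proof.
move=> cD BD BA /card_le1_eqP eq_meets; apply/subsetP=> x xA.
have : x \in cover D by rewrite (cover_partition cD) inE.
case/bigcupP=> K KD xK; suff -> : B = K by [].
apply: eq_meets; rewrite inE ?BD ?KD //.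
by apply/set0Pn; exists x; rewrite inE xK xA.
Qed.

Lemma cdist_gt0 C D : (0 < cdist C D) = [exists A in C, 1 < #|meets D A|].
Proof.
rewrite lt0n /cdist sum_nat_eq0 negb_forall; apply: eq_existsb => A.
by rewrite negb_imply subn_eq0 -ltnNge.
Qed.

Lemma cdist_add_card C D : clustering D -> set0 \notin C -> cdist C D + #|C| = weight C D.
Proof.
move=> cD C0; rewrite /cdist -sum1_card -big_split /=; apply: eq_bigr => A AC.
rewrite subnK //; apply: (card_meets_gt0 cD).
by apply: contraNneq C0 => <-.
Qed.

Lemma delta_weight C D :
  clustering C -> clustering D -> delta C D + #|C| + #|D| = 2 * weight C D.
Proof.
move=> cC cD; have := cdist_add_card cD (negbT (partition0 cC)).
have := cdist_add_card cC (negbT (partition0 cD)).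
rewrite /delta weightC; lia.
Qed.

Lemma delta_replace C Q R D :
  clustering C -> clustering D -> Q \subset C -> partition R (cover Q) ->
  delta C D + #|Q| + 2 * weight R D = delta ((C :\: Q) :|: R) D + #|R| + 2 * weight Q D.
Proof.
move=> cC cD sQC pR.
have dis := disjoint_replace cC sQC pR.
have wC : weight C D = weight (C :\: Q) D + weight Q D.
  by rewrite /weight (big_setID Q) /= (setIidPr sQC) addnC.
have wC' : weight ((C :\: Q) :|: R) D = weight (C :\: Q) D + weight R D.
  by rewrite /weight -bigU //; apply: eq_bigl => A; rewrite !inE.
have cardC : #|C| = #|C :\: Q| + #|Q| by rewrite -(cardsID Q C) (setIidPr sQC) addnC.
have cardC' : #|(C :\: Q) :|: R| = #|C :\: Q| + #|R|.
  by rewrite -cardsUI disjoint_setI0 // cards0 addn0.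
have := delta_weight cC cD; have := delta_weight (partition_replace cC sQC pR) cD.
lia.
Qed.

Lemma delta_split C D Ci Cj :
  clustering C -> clustering D -> Ci \in C -> Ci :&: Cj != set0 -> Ci :\: Cj != set0 ->
  clustering (split_cluster C Ci Cj) /\ delta C D <= (delta (split_cluster C Ci Cj) D).+1.
Proof.
move=> cC cD CiC CiI0 CiD0.
have sQC : [set Ci] \subset C by rewrite sub1set.
have pR : partition [set Ci :&: Cj; Ci :\: Cj] (cover [set Ci]).
  by rewrite cover1 partition_setID.
have -> : split_cluster C Ci Cj = (C :\: [set Ci]) :|: [set Ci :&: Cj; Ci :\: Cj] by [].
split; first exact: partition_replace cC sQC pR.
have le_weight : weight [set Ci] D <= weight [set Ci :&: Cj; Ci :\: Cj] D.
  rewrite {1}/weight big_set1 -{1}(cover1 Ci) -(cover_partition pR).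
  exact: card_meets_cover_le.
have := delta_replace cC cD sQC pR; rewrite cards1 cards2.
case: (_ != _) => /=; lia.
Qed.

Lemma delta_merge C D A B Cj :
  clustering C -> clustering D -> A \in C -> B \in C -> A != B ->
  Cj \in D -> A \subset Cj -> B \subset Cj ->
  clustering (merge_clusters C A B) /\ delta C D <= (delta (merge_clusters C A B) D).+1.
Proof.
move=> cC cD AC BC AB CjD sACj sBCj.
have sQC : [set A; B] \subset C by rewrite subUset !sub1set AC BC.
have AB0 : A :|: B != set0.
  by apply: contraTneq (partition_neq0 cC AC) => /eqP; rewrite setU_eq0 => /andP[->].
have pR : partition [set A :|: B] (cover [set A; B]).
  by rewrite /cover bigcup_setU !big_set1 partition_set1.
have -> : merge_clusters C A B = (C :\: [set A; B]) :|: [set A :|: B].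
  by rewrite /merge_clusters setDDl.
split; first exact: partition_replace cC sQC pR.
have tD := partition_trivIset cD.
have le_weight : weight [set A; B] D <= 2.
  rewrite /weight big_setU1 ?inE // big_set1.
  by rewrite -addn1 leq_add ?(card_meets_le1 tD CjD).
have weight_gt0 : 0 < weight [set A :|: B] D.
  by rewrite /weight big_set1 card_meets_gt0.
have := delta_replace cC cD sQC pR; rewrite cards2 AB cards1; lia.
Qed.

End Meets.

Lemma natural_error_descent (T : finType) (Cstar C : {set {set T}})
    (gamma : {set {set T}} -> nat) :
  clustering Cstar -> natural_error Cstar gamma -> clustering C -> 0 < delta C Cstar ->
  exists2 C', clustering C' & delta C Cstar <= (delta C' Cstar).+1 /\ gamma C' < gamma C.
Proof.
move=> cD gamma_nat cC delta_gt0; have [gamma_split gamma_merge] := gamma_nat C cC.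
have tD := partition_trivIset cD.
have [cdist0|] := posnP (cdist C Cstar); last first.
  rewrite cdist_gt0 => /exists_inP[Ci CiC /card_gt1P[Cj [Ck []]]].
  rewrite !inE => /andP[CjD CjCi] /andP[CkD CkCi] CjCk.
  have [x] := set0Pn _ CkCi; rewrite inE => /andP[xCk xCi].
  have xNCj : x \notin Cj.
    apply: contra CjCk => xCj; apply/eqP.
    by rewrite -(def_pblock tD CjD xCj) (def_pblock tD CkD xCk).
  have CiD0 : Ci :\: Cj != set0 by apply/set0Pn; exists x; rewrite inE xNCj.
  rewrite setIC in CjCi; have [cC' le_delta] := delta_split cC cD CiC CjCi CiD0.
  exists (split_cluster C Ci Cj) => //; split=> //.
  apply: gamma_split CiC CjD CjCi _; exists Ck; rewrite // setIC CkCi andbT.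
  by rewrite eq_sym.
have meets_le1 A : A \in C -> #|meets Cstar A| <= 1.
  move=> AC; rewrite leqNgt; apply/negP=> meets_gt1.
  have : 0 < cdist C Cstar by rewrite cdist_gt0; apply/exists_inP; exists A.
  by rewrite cdist0.
have : 0 < cdist Cstar C by move: delta_gt0; rewrite /delta cdist0 addn0.
rewrite cdist_gt0 => /exists_inP[Cj CjD /card_gt1P[A [B []]]]; rewrite !inE.
move=> /andP[AC CjA] /andP[BC CjB] AB; rewrite setIC in CjA; rewrite setIC in CjB.
have sACj := subset_of_card_meets_le1 cD CjD CjA (meets_le1 A AC).
have sBCj := subset_of_card_meets_le1 cD CjD CjB (meets_le1 B BC).
have [cC' le_delta] := delta_merge cC cD AC BC AB CjD sACj sBCj.
exists (merge_clusters C A B) => //; split=> //.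
by apply: gamma_merge AC BC AB _; exists Cj; rewrite // sACj sBCj.
Qed.

Theorem theorem8 (T : finType) (Cstar : {set {set T}})
  (gamma : {set {set T}} -> nat) :
  clustering Cstar -> natural_error Cstar gamma ->
  forall C : {set {set T}}, clustering C -> delta C Cstar <= gamma C.
Proof.
move=> cD gamma_nat C; have [n] := ubnP (gamma C); elim: n C => // n IH C.
rewrite ltnS => gamma_le cC; have [-> //|delta_gt0] := posnP (delta C Cstar).
have [C' cC' [le_delta gamma_lt]] := natural_error_descent cD gamma_nat cC delta_gt0.
have IH' := IH C' (leq_trans gamma_lt gamma_le) cC'.
exact: leq_trans le_delta (leq_ltn_trans IH' gamma_lt).
Qed.
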